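(* Let $\mathcal{F}$ be a 3CNF formula sampled from $\mathcal{P}^{\mathrm{plant}}_{n,p}$ with planted assignment $\varphi$, where $p\geq d/n^2$ and $d$ is a sufficiently large constant. Let $F_{SUPP}$ be the number of variables whose support with respect to $\varphi$ (the number of clauses of $\mathcal{F}$ they support w.r.t. $\varphi$) is less than $d/3$. Then with probability tending to $1$ as $n\to\infty$, $F_{SUPP}\leq e^{-\Theta(d)}n$.
   Context: 3CNF: each clause has exactly three literals over three distinct variables. $\mathcal{P}^{\mathrm{plant}}_{n,p}$: pick $\varphi$ uniformly at random in $\{\mathrm{TRUE},\mathrm{FALSE}\}^n$, then include each of the $7\binom n3$ 3-clauses satisfied by $\varphi$ independently with probability $p$. A variable $x$ supports a clause $C$ with respect to a partial assignment $\psi$ if $x$ is the only variable satisfying $C$ under $\psi$ and the other two variables of $C$ are assigned by $\psi$. *)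

From HB Require Import structures.
From mathcomp Require Import all_boot all_order all_algebra.
From mathcomp Require Import all_classical all_reals all_analysis.
Set Implicit Arguments. Unset Strict Implicit. Unset Printing Implicit Defensive.
Import Order.TTheory GRing.Theory Num.Theory.
Local Open Scope ring_scope.

(* Variables are 'I_n; a literal is a pair (x, b): the literal is x if b = true
   and ~x if b = false.  An assignment is phi : {ffun 'I_n -> bool}. *)
Definition lit (n : nat) := ('I_n * bool)%type.

Definition lit_true n (phi : {ffun 'I_n -> bool}) (l : lit n) : bool :=
  phi l.1 == l.2.

Definition is_3clause n (C : {set lit n}) : bool :=
  (#|C| == 3)%N &&
  [forall l in C, forall l' in C, (l.1 == l'.1) ==> (l == l')].

Definition clause_sat n (phi : {ffun 'I_n -> bool}) (C : {set lit n}) : bool :=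
  [exists l in C, lit_true phi l].

Definition planted_clauses n (phi : {ffun 'I_n -> bool}) : {set {set lit n}} :=
  [set C | is_3clause C && clause_sat phi C].

Definition formula n := {set {set lit n}}.

(* Probability of an event E (depending on the planted assignment and the
   formula) under P^plant_{n,p}: phi uniform on {TRUE,FALSE}^n, then each
   clause satisfied by phi included independently with probability p. *)
Definition Pplant {R : realType} (n : nat) (p : R)
    (E : {ffun 'I_n -> bool} -> formula n -> bool) : R :=
  \sum_(phi : {ffun 'I_n -> bool})
     (2 ^+ n)^-1 *
     \sum_(F : formula n | F \subset planted_clauses phi)
        p ^+ #|F| * (1 - p) ^+ (#|planted_clauses phi| - #|F|)%N
        * (E phi F)%:R.

(* x supports C w.r.t. the (total) assignment phi: x is the only variable of C
   whose literal in C is satisfied by phi (the other two variables of C are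
   assigned, since phi is total). *)
Definition supports n (phi : {ffun 'I_n -> bool}) (x : 'I_n) (C : {set lit n})
  : bool :=
  [exists l in C, (l.1 == x) && lit_true phi l] &&
  [forall l in C, lit_true phi l ==> (l.1 == x)].

Definition support n (F : formula n) (phi : {ffun 'I_n -> bool}) (x : 'I_n)
  : nat := #|[set C in F | supports phi x C]|.

Definition F_SUPP (R : realType) n (d : R) (F : formula n)
    (phi : {ffun 'I_n -> bool}) : nat :=
  #|[set x : 'I_n | (support F phi x)%:R < d / 3]|.
Arguments Pplant {R} n p E.

(* Fix the planted assignment phi and let S_x be the planted clauses in which
   the literal of x is the only true one; x supports exactly the clauses of S_x
   present in the formula, the sets S_x are pairwise disjoint and each has at
   least m = C(n-1,2) elements.  Disjointness makes the supports of distinct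
   variables independent: for any set X of variables,
   E[prod_(x in X) r^supp(x)] <= q^(m|X|) with q = 1 - p(1 - r).  Expanding
   e^F_SUPP as the sum of (e-1)^|X| over the sets X of low-support variables and
   using 1 <= e^(d/15) e^(-supp(x)/5) for those, E[e^F_SUPP] <= exp(n e^(1-d/75))
   as soon as p m >= 12d/25.  Markov's inequality then bounds the probability
   that F_SUPP > e^(-d/150) n by exp(-(e^(-d/150) - e^(1-d/75)) n), which
   vanishes for d >= 300. *)

From Pilot Require Import Defs.
From HB Require Import structures.
From mathcomp Require Import all_boot all_order all_algebra.
From mathcomp Require Import all_classical all_reals all_analysis.
From mathcomp Require Import ring lra zify.
Import Order.TTheory GRing.Theory Num.Theory.
Import numFieldNormedType.Exports.
Local Open Scope ring_scope.
Set Implicit Arguments. Unset Strict Implicit. Unset Printing Implicit Defensive.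

Section SubsetSums.
Variables (R : comPzRingType) (T : finType).

Lemma sum_subset_prod (A : {set T}) (a b : T -> R) :
  \sum_(X : {set T} | X \subset A) (\prod_(i in X) a i) * \prod_(i in A :\: X) b i
  = \prod_(i in A) (a i + b i).
Proof.
pose a' i := if i \in A then a i else 0.
pose b' i := if i \in A then b i else 1.
have -> : \prod_(i in A) (a i + b i) = \prod_i (a' i + b' i).
  rewrite [RHS](bigID (mem A)) /= [X in _ * X]big1 ?mulr1.
    by apply: eq_bigr => i iA; rewrite /a' /b' iA.
  by move=> i /negbTE iA; rewrite /a' /b' iA add0r.
rewrite bigA_distr [RHS](bigID (fun X : {set T} => X \subset A)) /=.
rewrite [X in _ + X]big1 ?addr0; last first.
  move=> X /subsetPn [i iX iA].
  by rewrite (bigD1 i) //= iX /a' (negbTE iA) mul0r.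
apply: eq_bigr => X XA; rewrite [RHS](bigID (mem X)) /=; congr (_ * _).
  by apply: eq_bigr => i iX; rewrite iX /a' (fintype.subsetP XA i iX).
rewrite [RHS](bigID (mem A)) /= [X in _ * X]big1 ?mulr1; last first.
  by move=> i /andP [/negbTE iX /negbTE iA]; rewrite iX /b' iA.
apply: eq_big => [i | i]; first by rewrite !inE.
by rewrite !inE => /andP [/negbTE iX iA]; rewrite iX /b' iA.
Qed.

Lemma sum_subset_expr (A : {set T}) (c : R) :
  \sum_(X : {set T} | X \subset A) c ^+ #|X| = (c + 1) ^+ #|A|.
Proof.
rewrite -prodr_const -sum_subset_prod; apply: eq_bigr => X _.
by rewrite prodr_const big1 ?mulr1.
Qed.

Lemma sum_set_expr (c : R) : \sum_(X : {set T}) c ^+ #|X| = (c + 1) ^+ #|T|.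
Proof. by rewrite -cardsT -sum_subset_expr; apply: eq_bigl => X; rewrite finset.subsetT. Qed.

Lemma sum_bernoulli_prod (A : {set T}) (p : R) (g : T -> R) :
  \sum_(X : {set T} | X \subset A)
     p ^+ #|X| * (1 - p) ^+ (#|A| - #|X|) * \prod_(i in X) g i
  = \prod_(i in A) (p * g i + (1 - p)).
Proof.
rewrite -sum_subset_prod; apply: eq_bigr => X XA.
by rewrite big_split /= !prodr_const cardsDS // mulrAC mulrC.
Qed.

End SubsetSums.

Section SupportedClauses.
Variables (n : nat) (phi : {ffun 'I_n -> bool}).

Lemma supports_uniq (x y : 'I_n) (C : {set lit n}) :
  supports phi x C -> supports phi y C -> x = y.
Proof.
case/andP => /existsP [l /andP [lC /andP [/eqP <- lt]]] _.
by case/andP => _ /forallP /(_ l); rewrite lC lt => /eqP.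
Qed.

Definition supported_clauses (x : 'I_n) : {set {set lit n}} :=
  [set C in planted_clauses phi | supports phi x C].

Definition support_clause (x : 'I_n) (A : {set 'I_n}) : {set lit n} :=
  (x, phi x) |: [set (y, ~~ phi y) | y in A].

Lemma falsified_lit_inj : injective (fun y : 'I_n => (y, ~~ phi y)).
Proof. exact: can_inj (fun l => l.1) _. Qed.

Section SupportClause.
Variables (x : 'I_n) (A : {set 'I_n}).

Lemma mem_support_clause (y : 'I_n) :
  ((y, ~~ phi y) \in support_clause x A) = (y \in A).
Proof.
rewrite !inE (mem_imset _ _ falsified_lit_inj).
by case: eqP => [[-> /eqP] | //]; case: (phi x).
Qed.

Hypothesis xA : x \notin A.

Lemma support_clause_sign (l : lit n) : l \in support_clause x A ->
  l.2 = if l.1 == x then phi l.1 else ~~ phi l.1.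
Proof.
rewrite !inE => /orP [/eqP -> | /imsetP [y yA ->]] /=; first by rewrite eqxx.
by case: eqP yA => [-> | //]; rewrite (negbTE xA).
Qed.

Lemma lit_true_support_clause (l : lit n) :
  l \in support_clause x A -> lit_true phi l = (l.1 == x).
Proof.
by move/support_clause_sign; rewrite /lit_true => ->; case: (l.1 == x); case: (phi l.1).
Qed.

Lemma support_clause_supported : #|A| = 2 -> support_clause x A \in supported_clauses x.
Proof.
move=> cardA; have xC : (x, phi x) \in support_clause x A by rewrite setU11.
rewrite !inE -andbA; apply/and3P; split.
- apply/andP; split.
    rewrite cardsU1 (card_imset _ falsified_lit_inj).
    rewrite cardA; case: imsetP => // [[y _ [ey]]].
    by rewrite -ey; case: (phi x).
  apply/forallP => l; apply/implyP => lC; apply/forallP => l'; apply/implyP => l'C.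
  apply/implyP => /eqP e; apply/eqP/injective_projections => //.
  by rewrite (support_clause_sign lC) (support_clause_sign l'C) e.
- by apply/existsP; exists (x, phi x); rewrite xC /lit_true eqxx.
- apply/andP; split; first by apply/existsP; exists (x, phi x); rewrite xC /lit_true !eqxx.
  by apply/forallP => l; apply/implyP => lC; rewrite (lit_true_support_clause lC) implybb.
Qed.

End SupportClause.

Lemma bin_le_card_supported (x : 'I_n) : ('C(n.-1, 2) <= #|supported_clauses x|)%N.
Proof.
pose D := [set A : {set 'I_n} | A \subset [set~ x] & #|A| == 2].
have xD A : A \in D -> x \notin A.
  by rewrite inE => /andP [/fintype.subsetP /(_ x)]; rewrite !inE eqxx; case: (x \in A) => // ->.
have <- : #|D| = 'C(n.-1, 2) by rewrite cards_draws cardsC1 card_ord.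
rewrite -(card_in_imset (f := support_clause x)); last first.
  move=> A B _ _ eAB; apply/setP => y.
  by rewrite -(mem_support_clause x A) eAB mem_support_clause.
apply/subset_leq_card/fintype.subsetP => _ /imsetP [A AD ->].
by apply: support_clause_supported (xD _ AD) _; move: AD; rewrite inE => /andP [_ /eqP].
Qed.

End SupportedClauses.

Lemma expR_card_le_sum_prod (R : realType) (T : finType) (B : {set T}) (g : T -> R) :
  (forall i, 0 <= g i) -> (forall i, i \in B -> 1 <= g i) ->
  expR #|B|%:R <= \sum_(X : {set T}) (expR 1 - 1) ^+ #|X| * \prod_(i in X) g i.
Proof.
move=> g0 g1; have e1 : 0 <= expR 1 - 1 :> R.
  by rewrite subr_ge0 ltW // expR_gt1.
have -> : expR #|B|%:R = \sum_(X : {set T} | X \subset B) (expR 1 - 1) ^+ #|X| :> R.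
  by rewrite (sum_subset_expr B (expR 1 - 1)) subrK -expRM_natl mulr1.
rewrite [leRHS](bigID (fun X : {set T} => X \subset B)) /= -[leLHS]addr0.
apply: lerD; last by apply: sumr_ge0 => X _; rewrite mulr_ge0 ?exprn_ge0 ?prodr_ge0.
apply: ler_sum => X XB; rewrite -[leLHS]mulr1 ler_wpM2l ?exprn_ge0 //.
apply: (big_ind (fun u => 1 <= u)) => // [u v|i iX]; first exact: mulr_ege1.
exact/g1/(fintype.subsetP XB).
Qed.

Definition plant_weight (R : realType) n (phi : {ffun 'I_n -> bool}) (p : R)
    (F : formula n) : R :=
  p ^+ #|F| * (1 - p) ^+ (#|planted_clauses phi| - #|F|).

Section PlantedFormula.
Variables (R : realType) (n : nat) (phi : {ffun 'I_n -> bool}) (p : R).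
Hypotheses (p0 : 0 <= p) (p1 : p <= 1).

Local Notation P := (planted_clauses phi).
Local Notation w := (plant_weight phi p).

Lemma plant_weight_ge0 (F : formula n) : 0 <= w F.
Proof. by rewrite mulr_ge0 ?exprn_ge0 // subr_ge0. Qed.

Lemma sum_plant_weight : \sum_(F : formula n | F \subset P) w F = 1.
Proof.
have := sum_bernoulli_prod P p (fun _ => 1 : R).
rewrite [RHS]big1 => [<-|C _]; last by rewrite mulr1 subrKC.
by apply: eq_bigr => F _; rewrite big1 ?mulr1.
Qed.

Lemma supportE (F : formula n) (x : 'I_n) :
  Defs.support F phi x = (\sum_(C in F) supports phi x C)%N.
Proof. by rewrite /Defs.support -sum1dep_card big_mkcondr /=; apply: eq_bigr => C; case: supports. Qed.

Lemma sum_supports_le1 (X : {set 'I_n}) (C : {set lit n}) :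
  (\sum_(x in X) supports phi x C <= 1)%N.
Proof.
case: (pickP (fun x => (x \in X) && supports phi x C)) => [x0 /andP [x0X sx0] | none].
  rewrite (bigD1 x0) //= sx0 big1 // => y /andP [_ yx0].
  by case sy: supports; rewrite // (supports_uniq sy sx0) eqxx in yx0.
by rewrite big1 // => y yX; move: (none y); rewrite yX; case: supports.
Qed.

(* A clause is supported by at most one variable, so the moment factorises
   over the independently drawn clauses. *)
Lemma expect_prod_support (r : R) (X : {set 'I_n}) :
  \sum_(F : formula n | F \subset P) w F * \prod_(x in X) r ^+ Defs.support F phi x
  = (p * r + (1 - p)) ^+ (\sum_(x in X) #|supported_clauses phi x|)%N.
Proof.
pose N C := (\sum_(x in X) supports phi x C)%N.
transitivity (\sum_(F : formula n | F \subset P) w F * \prod_(C in F) r ^+ N C).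
  apply: eq_bigr => F _; congr (_ * _).
  under eq_bigr do rewrite supportE expr_sum.
  by rewrite exchange_big; apply: eq_bigr => C _; rewrite prodrXr.
rewrite sum_bernoulli_prod.
transitivity (\prod_(C in P) (p * r + (1 - p)) ^+ N C).
  apply: eq_bigr => C _; have := sum_supports_le1 X C; rewrite -/(N C).
  by case: (N C) => [|[|]] // _; rewrite mulr1 subrKC.
rewrite prodrXr exchange_big; congr (_ ^+ _); apply: eq_bigr => x _.
by rewrite -sum1dep_card big_mkcondr /=; apply: eq_bigr => C; rewrite !inE; case: supports.
Qed.

Lemma sum_plant_weight_expR_F_SUPP (d Z r : R) (m : nat) :
  0 <= r <= 1 -> 0 <= Z -> (forall s : nat, s%:R < d / 3 -> 1 <= Z * r ^+ s) ->
  (forall x, m <= #|supported_clauses phi x|)%N ->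
  \sum_(F : formula n | F \subset P) w F * expR (F_SUPP d F phi)%:R
  <= ((expR 1 - 1) * Z * (p * r + (1 - p)) ^+ m + 1) ^+ n.
Proof.
move=> /andP [r0 r1] Z0 hZ hm; set u := expR 1 - 1; set q := p * r + (1 - p).
have u0 : 0 <= u by rewrite subr_ge0 ltW // expR_gt1.
have q0 : 0 <= q by rewrite addr_ge0 ?mulr_ge0 // subr_ge0.
have q1 : q <= 1.
  have : 0 <= p * (1 - r) by rewrite mulr_ge0 // subr_ge0.
  by rewrite /q; lra.
pose g F x := Z * r ^+ Defs.support F phi x.
apply: (le_trans (y := \sum_(F : formula n | F \subset P)
   w F * \sum_(X : {set 'I_n}) u ^+ #|X| * \prod_(x in X) g F x)).
  apply: ler_sum => F _; apply: ler_wpM2l; first exact: plant_weight_ge0.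
  apply: expR_card_le_sum_prod => x; first by rewrite mulr_ge0 ?exprn_ge0.
  by rewrite inE; apply: hZ.
under eq_bigr do rewrite big_distrr /=.
rewrite exchange_big -[in leRHS](card_ord n) -sum_set_expr; apply: ler_sum => X _.
have -> : \sum_(F : formula n | F \subset P) w F * (u ^+ #|X| * \prod_(x in X) g F x)
    = (u * Z) ^+ #|X| * q ^+ (\sum_(x in X) #|supported_clauses phi x|)%N.
  rewrite -expect_prod_support big_distrr; apply: eq_bigr => F _.
  by rewrite big_split prodr_const /= exprMn; ring.
rewrite !exprMn ler_wpM2l ?mulr_ge0 ?exprn_ge0 // -exprM mulnC -sum_nat_const.
by rewrite ler_wiXn2l // leq_sum.
Qed.

End PlantedFormula.

Lemma sum_uniform_assignment (R : numFieldType) (n : nat) :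
  \sum_(phi : {ffun 'I_n -> bool}) (2 ^+ n)^-1 = 1 :> R.
Proof.
rewrite sumr_const card_ffun card_bool card_ord.
by rewrite -[_ *+ _]mulr_natr natrX mulVf // expf_neq0.
Qed.

Section PlantedDistribution.
Variables (R : realType) (n : nat) (p : R).
Hypotheses (p0 : 0 <= p) (p1 : p <= 1).

Lemma Pplant_ge0 (E : {ffun 'I_n -> bool} -> formula n -> bool) : 0 <= Pplant n p E.
Proof.
apply: sumr_ge0 => phi _; rewrite mulr_ge0 ?invr_ge0 ?exprn_ge0 //.
by apply: sumr_ge0 => F _; apply: mulr_ge0; [exact: plant_weight_ge0 | exact: ler0n].
Qed.

Lemma Pplant_not (E : {ffun 'I_n -> bool} -> formula n -> bool) :
  Pplant n p (fun phi F => ~~ E phi F) = 1 - Pplant n p E.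
Proof.
rewrite -(sum_uniform_assignment R n) -sumrB; apply: eq_bigr => phi _.
rewrite -[X in _ = X - _]mulr1 -mulrBr; congr (_ * _).
rewrite -[X in _ = X - _](sum_plant_weight phi p) -sumrB.
by apply: eq_bigr => F _; case: E; rewrite ?mulr0 ?subr0 ?mulr1 ?subrr.
Qed.

Lemma Pplant_le_moment (E : {ffun 'I_n -> bool} -> formula n -> bool)
    (f : {ffun 'I_n -> bool} -> formula n -> R) (b : R) :
  (forall phi F, 0 <= f phi F) -> (forall phi F, E phi F -> 1 <= f phi F) ->
  (forall phi, \sum_(F : formula n | F \subset planted_clauses phi)
                 plant_weight phi p F * f phi F <= b) ->
  Pplant n p E <= b.
Proof.
move=> f0 f1 hb; rewrite -[leRHS]mul1r -(sum_uniform_assignment R n) mulr_suml.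
apply: ler_sum => phi _; rewrite ler_wpM2l ?invr_ge0 ?exprn_ge0 //.
apply: le_trans (hb phi); apply: ler_sum => F _.
rewrite ler_wpM2l //; first exact: plant_weight_ge0.
by case e: E; [exact: f1 | exact: f0].
Qed.

End PlantedDistribution.

Lemma Pplant_F_SUPP_le (R : realType) (n : nat) (p d t Z r : R) (m : nat) :
  0 <= p <= 1 -> 0 <= r <= 1 -> 0 <= Z ->
  (forall s : nat, s%:R < d / 3 -> 1 <= Z * r ^+ s) -> (m <= 'C(n.-1, 2))%N ->
  1 - Pplant n p (fun phi F => (F_SUPP d F phi)%:R <= t * n%:R)
  <= expR (- (t * n%:R)) * ((expR 1 - 1) * Z * (p * r + (1 - p)) ^+ m + 1) ^+ n.
Proof.
move=> /andP [p0 p1] r01 Z0 hZ hm; rewrite -Pplant_not //.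
apply: (Pplant_le_moment p0 p1
  (f := fun phi F => expR (- (t * n%:R)) * expR (F_SUPP d F phi)%:R)).
- by move=> phi F; rewrite -expRD expR_ge0.
- move=> phi F; rewrite -ltNge -expRD => lt.
  by apply: le_trans (expR_ge1Dx _); lra.
move=> phi; under eq_bigr do rewrite mulrCA; rewrite -big_distrr ler_wpM2l ?expR_ge0 //.
apply: sum_plant_weight_expR_F_SUPP => // x.
exact: leq_trans hm (bin_le_card_supported phi x).
Qed.

Lemma bin2_pred_ge (n : nat) : (75 <= n)%N -> (24 * n ^ 2 <= 50 * 'C(n.-1, 2))%N.
Proof.
have := bin_ffact n.-1 2; rewrite ffactnS ffactn1 (_ : 2`! = 2%N) // => e.
by case: n e => [|[|n]] //= e h; nia.
Qed.

Lemma expR_neg_fifth_le (R : realType) : expR (- (1 / 5)) <= 5 / 6 :> R.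
Proof.
rewrite expRN -[5 / 6 : R]invf_div lef_pV2 ?posrE ?expR_gt0 //.
by apply: le_trans _ (expR_ge1Dx _); lra.
Qed.

Section NumericEstimates.
Variables (R : realType) (n : nat) (d p : R).
Hypotheses (d0 : 0 <= d) (p0 : 0 <= p) (p1 : p <= 1).
Hypotheses (dp : d / n%:R ^+ 2 <= p) (n75 : (75 <= n)%N).

Lemma mul_bin2_pred_ge : 12 / 25 * d <= p * 'C(n.-1, 2)%:R.
Proof.
have n0 : 0 < n%:R :> R by rewrite ltr0n (leq_trans _ n75).
have : 12 / 25 * n%:R ^+ 2 <= 'C(n.-1, 2)%:R :> R.
  by move: (bin2_pred_ge n75); rewrite -(ler_nat R) !natrM expr2; lra.
move=> mC; have : d / n%:R ^+ 2 * (12 / 25 * n%:R ^+ 2) <= p * 'C(n.-1, 2)%:R.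
  by apply: ler_pM => //; rewrite divr_ge0 ?exprn_ge0 ?ler0n.
suff -> : d / n%:R ^+ 2 * (12 / 25 * n%:R ^+ 2) = 12 / 25 * d by [].
by field; rewrite gt_eqF.
Qed.

Lemma F_SUPP_moment_term_le :
  (expR 1 - 1) * expR (d / 15) * (p * expR (- (1 / 5)) + (1 - p)) ^+ 'C(n.-1, 2)
  <= expR (1 - d / 75).
Proof.
set r := expR (- (1 / 5)); set m := 'C(n.-1, 2).
have r56 : r <= 5 / 6 := expR_neg_fifth_le R.
have q0 : 0 <= p * r + (1 - p) by rewrite addr_ge0 ?mulr_ge0 ?expR_ge0 // subr_ge0.
have qm : (p * r + (1 - p)) ^+ m <= expR (- (2 / 25 * d)).
  apply: (le_trans (y := expR (- (p * (1 - r))) ^+ m)).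
    by rewrite lerXn2r ?nnegrE ?expR_ge0 //; apply: le_trans _ (expR_ge1Dx _); lra.
  rewrite -expRM_natl ler_expR.
  have : 1 / 6 * (p * m%:R) <= (1 - r) * (p * m%:R).
    by rewrite ler_wpM2r ?mulr_ge0 ?ler0n //; lra.
  by have := mul_bin2_pred_ge; lra.
have e1 : expR 1 - 1 <= expR 1 :> R by rewrite gerBl.
apply: (le_trans (y := expR 1 * expR (d / 15) * expR (- (2 / 25 * d)))).
  have e0 : 0 <= expR 1 - 1 :> R by rewrite subr_ge0 ltW // expR_gt1.
  by apply: ler_pM; rewrite ?exprn_ge0 ?mulr_ge0 ?expR_ge0 ?ler_wpM2r ?expR_ge0.
by rewrite -!expRD ler_expR; lra.
Qed.

End NumericEstimates.

Local Open Scope classical_set_scope.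

Lemma cvg_to1_of_expR_tail (R : realType) (u : nat -> R) (delta : R) : 0 < delta ->
  (\forall n \near \oo, 0 <= 1 - u n <= expR (- (delta * n%:R))) -> u @ \oo --> (1 : R).
Proof.
move=> delta0 tail_u.
have geo : (fun n => 1 - expR (- delta) ^+ n) @ \oo --> (1 : R).
  rewrite -[X in _ --> X]subr0; apply: cvgB; first exact: cvg_cst.
  by apply: cvg_expr; rewrite ger0_norm ?expR_ge0 // expR_lt1 oppr_lt0.
apply: (squeeze_cvgr _ geo (cvg_cst (1 : R))); move: tail_u; apply: filterS => n.
by rewrite -expRM_natl mulrN mulrC; lra.
Qed.

Lemma Pplant_F_SUPP_tail (R : realType) (n : nat) (d p t : R) :
  0 <= d -> 0 <= p <= 1 -> d / n%:R ^+ 2 <= p -> (75 <= n)%N ->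
  1 - Pplant n p (fun phi F => (F_SUPP d F phi)%:R <= t * n%:R)
  <= expR (- ((t - expR (1 - d / 75)) * n%:R)).
Proof.
move=> d0 /andP [p0 p1] dp n75.
have hZ (s : nat) : s%:R < d / 3 -> 1 <= expR (d / 15) * expR (- (1 / 5)) ^+ s.
  by move=> sd; rewrite -expRM_natl -expRD; apply: le_trans (expR_ge1Dx _); lra.
apply: le_trans (Pplant_F_SUPP_le (m := 'C(n.-1, 2)) t _ _ _ hZ _) _ => //.
- by rewrite p0.
- by rewrite expR_ge0 expR_le1; lra.
have := F_SUPP_moment_term_le d0 p0 p1 dp n75; set y := _ * _ ^+ _ => hy.
have y0 : 0 <= y.
  have e0 : 0 <= expR 1 - 1 :> R by rewrite subr_ge0 ltW // expR_gt1.
  have q0 : 0 <= p * expR (- (1 / 5)) + (1 - p).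
    by rewrite addr_ge0 ?mulr_ge0 ?expR_ge0 // subr_ge0.
  by rewrite mulr_ge0 ?exprn_ge0 ?mulr_ge0 ?expR_ge0.
apply: (le_trans (y := expR (- (t * n%:R)) * expR y ^+ n)).
  by rewrite ler_wpM2l ?expR_ge0 // lerXn2r ?nnegrE ?expR_ge0 ?addr_ge0 // addrC expR_ge1Dx.
rewrite -expRM_natl -expRD ler_expR.
have : n%:R * y <= n%:R * expR (1 - d / 75) by rewrite ler_wpM2l.
lra.
Qed.

Theorem proposition2 (R : realType) :
  exists c : R, 0 < c /\
  exists d0 : R, forall d : R, d0 <= d ->
  forall p : nat -> R,
    (forall n, 0 <= p n <= 1) ->
    (exists N : nat, forall n : nat, (N <= n)%N -> d / (n%:R ^+ 2) <= p n) ->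
    (fun n : nat => Pplant n (p n)
        (fun phi F => (F_SUPP d F phi)%:R <= expR (- (c * d)) * n%:R))
      @ \oo --> (1 : R).
Proof.
exists (1 / 150); split; first by rewrite divr_gt0.
exists 300 => d d300 p p01 [N dp].
apply: (cvg_to1_of_expR_tail (delta := expR (- (1 / 150 * d)) - expR (1 - d / 75))).
  by rewrite subr_gt0 ltr_expR; lra.
exists (maxn N 75) => // n /=; rewrite geq_max => /andP [Nn n75].
have /andP [p0 p1] := p01 n.
apply/andP; split; first by rewrite -Pplant_not ?Pplant_ge0.
by apply: Pplant_F_SUPP_tail; rewrite ?p01 ?dp //; lra.
Qed.
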